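(* Let $\mathbf{X}$ be a Polish space (regarded as a represented space via a Cauchy representation) that is $'$-overt. Then $\mathbf{X}$ is $K_\sigma$, i.e. a countable union of compact subsets.
   Context: A represented space is a pair $(X,\delta_X)$ with $\delta_X:\subseteq\mathbb{N}^\mathbb{N}\to X$ a partial surjection; $\mathcal{C}(\mathbf{X},\mathbf{Y})$ is the represented space of continuous maps. $\mathbb{S}=(\{\bot,\top\},\delta_\mathbb{S})$ with $\delta_\mathbb{S}(0^\mathbb{N})=\bot$, $\delta_\mathbb{S}(p)=\top$ otherwise. $\lim(p)(n)=\lim_{i\to\infty}p(\langle n,i\rangle)$; $\mathbb{S}'=(\{\bot,\top\},\delta_\mathbb{S}\circ\lim)$; $\mathcal{O}'(\mathbf{X})=\mathcal{C}(\mathbf{X},\mathbb{S}')$, elements identified with subsets of $X$. $\mathbf{X}$ is $'$-overt if $\operatorname{IsNonEmpty}:\mathcal{O}'(\mathbf{X})\to\mathbb{S}'$, $U\mapsto\top$ iff $U\neq\emptyset$, is computable, for a general Polish space understood relative to an oracle (i.e. continuous). *)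

From HB Require Import structures.
From mathcomp Require Import all_boot all_order all_algebra.
From mathcomp Require Import all_classical all_reals all_analysis.
Set Implicit Arguments. Unset Strict Implicit. Unset Printing Implicit Defensive.
Import Order.TTheory GRing.Theory Num.Theory.
Local Open Scope classical_set_scope.
Local Open Scope ring_scope.

Definition baire := nat -> nat.

Definition cpair (n i : nat) : nat := ((n + i) * (n + i).+1) %/ 2 + i.

Definition cont_on (D : set baire) (F : baire -> baire) : Prop :=
  forall p, D p -> forall n, exists m, forall p', D p' ->
    (forall i, (i < m)%N -> p' i = p i) -> F p' n = F p n.

(** Cauchy representation of a separable metric space w.r.t. the dense
    sequence a: p names x iff d(a_(p n), x) < 2^-n for all n. *)
Definition cauchy_name {R : realType} {X : pseudoMetricType R} (a : nat -> X)
  (p : baire) (x : X) : Prop :=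
  forall n, ball (a (p n)) ((2%:R ^+ n)^-1 : R) x.

(** The limit operation lim(r)(n) = lim_i r(<n,i>) (as a relation). *)
Definition lim_rel (r s : baire) : Prop :=
  forall n, exists i0, forall i, (i0 <= i)%N -> r (cpair n i) = s n.

(** Representation of Sierpinski space S: 0^N names bot, everything else top.
    Truth values are Props (top = True).  S' = (S, delta_S o lim). *)
Definition S'_name (r : baire) (P : Prop) : Prop :=
  exists s, lim_rel r s /\ (P <-> exists n, s n <> 0%N).

(** Standard representation of continuous partial functions on Baire space
    via Kleene associates: eta_q(p)(n) = k iff q(code(n, p|m)) = k+1 for the
    least m with q(code(n, p|m)) <> 0. *)
Definition assoc_out (q p : baire) (n k : nat) : Prop :=
  exists m, q (pickle (n, mkseq p m)) = k.+1 /\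
    forall m', (m' < m)%N -> q (pickle (n, mkseq p m')) = 0%N.

(** Function-space representation of O'(X) = C(X, S'), elements identified
    with subsets U of X (U = f^-1(top)): q names U iff eta_q realizes the map
    x |-> (x \in U) : X -> S'. *)
Definition O'_name {R : realType} {X : pseudoMetricType R} (a : nat -> X)
  (q : baire) (U : set X) : Prop :=
  forall p x, cauchy_name a p x ->
    exists r, (forall n, assoc_out q p n (r n)) /\ S'_name r (U x).

(** X is '-overt: IsNonEmpty : O'(X) -> S' has a continuous realizer
    (i.e. is computable relative to some oracle). *)
Definition prime_overt {R : realType} {X : pseudoMetricType R} (a : nat -> X)
  : Prop :=
  exists F : baire -> baire,
    cont_on [set q | exists U, O'_name a q U] F /\
    forall q U, O'_name a q U -> S'_name (F q) (U !=set0).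

Definition K_sigma {T : topologicalType} : Prop :=
  exists K : nat -> set T, (forall n, compact (K n)) /\ \bigcup_n K n = setT.

(* Suppose X is not K_sigma.  By a Lindelof argument the set Z of points without
   a K_sigma neighbourhood is then nonempty, and Z is nowhere locally totally
   bounded: otherwise the closure of Z near a point of Z would be compact, and
   the point would have a K_sigma neighbourhood.  A closed set X \ U_j B_j,
   given by an enumeration of basic balls B_j, has an O'-name computable from the
   enumeration.  Given a continuous realizer F of IsNonEmpty, build nested balls
   centred in Z while extending such an enumeration: at stage t, append a long
   enough initial segment of an enumeration of all balls of some small radius.
   That full enumeration has empty complement, so F outputs zeros cofinally in
   every column, and by continuity the segment already forces zeros beyond t in
   the columns below t; since Z is not totally bounded, the next ball can avoid
   the appended balls.  The limit enumeration leaves the common point of the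
   nested balls uncovered, yet F names its complement as empty. *)

From HB Require Import structures.
From mathcomp Require Import all_boot all_order all_algebra.
From mathcomp Require Import all_classical all_reals all_analysis.
From mathcomp Require Import ring lra.
Import Order.TTheory GRing.Theory Num.Theory.
Local Open Scope classical_set_scope.
Local Open Scope ring_scope.

Lemma cpair_ge n i : (i <= cpair n i)%N.
Proof. exact: leq_addl. Qed.

Lemma S'_name_monotone (P : nat -> Prop) :
  (forall c c', (c <= c')%N -> P c -> P c') ->
  S'_name (fun c => if `[< P c >] then 0%N else 1%N) (~ exists c, P c).
Proof.
move=> Pmono; exists (fun=> if `[< exists c, P c >] then 0%N else 1%N); split.
  move=> n; case: (pselect (exists c, P c)) => [[c0 Pc0]|nP].
    exists c0 => i c0i.
    have Pi : P (cpair n i) by exact: Pmono (leq_trans c0i (cpair_ge n i)) Pc0.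
    by rewrite !asboolT //; exists c0.
  by exists 0%N => i _; rewrite !asboolF // => Pi; apply: nP; exists (cpair n i).
split=> [nP|[n]]; first by exists 0%N; rewrite asboolF.
by case: asboolP.
Qed.

Lemma S'_name_true {r} {P : Prop} : S'_name r P -> P ->
  exists n i0, forall i, (i0 <= i)%N -> r (cpair n i) <> 0%N.
Proof.
move=> [s [lim_s /[apply] [[n sn]]]]; have [i0 hi0] := lim_s n.
by exists n, i0 => i /hi0 ->.
Qed.

Lemma uniform_bound (P : nat -> nat -> Prop) t :
  (forall n, exists m, forall m', (m <= m')%N -> P n m') ->
  exists M, forall n, (n <= t)%N -> P n M.
Proof.
move=> /choice [m hm]; exists (\max_(n < t.+1) m n) => n nt; apply: hm.
exact: (@leq_bigmax _ (fun i : 'I_t.+1 => m i) (Ordinal (nt : n < t.+1)%N)).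
Qed.

Lemma dependent_choice_nat {T : Type} {P : T -> Prop} {Q : nat -> T -> T -> Prop}
    {s0 : T} :
  P s0 -> (forall n s, P s -> exists2 s', P s' & Q n s s') ->
  exists S : nat -> T, forall n, P (S n) /\ Q n (S n) (S n.+1).
Proof.
move=> Ps0 step.
have /choice [g hg] : forall ns : nat * T, exists s', P ns.2 -> P s' /\ Q ns.1 ns.2 s'.
  move=> [n s]; have [Ps|nPs] := pselect (P s); last by exists s.
  by have [s' Ps' Qs'] := step n s Ps; exists s'.
pose S := fix S n := if n is m.+1 then g (m, S m) else s0.
have PS n : P (S n) by elim: n => // n /(hg (n, S n)) [].
by exists S => n; split=> //; exact: (hg (n, S n) (PS n)).2.
Qed.

Lemma chain_le {T : Type} (r : T -> T -> Prop) (f : nat -> T) :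
  (forall x, r x x) -> (forall x y z, r x y -> r y z -> r x z) ->
  (forall n, r (f n) (f n.+1)) -> forall m n, (m <= n)%N -> r (f m) (f n).
Proof.
move=> refl trans step m; elim=> [|n IHn]; first by rewrite leqn0 => /eqP ->.
by rewrite leq_eqVlt ltnS => /orP [/eqP ->|/IHn mn]; [exact: refl|exact: trans (step n)].
Qed.

Section dyadic.
Context {R : realType}.

Definition dyadic (k : nat) : R := (2%:R ^+ k)^-1.

Lemma dyadic_gt0 k : 0 < dyadic k.
Proof. by rewrite invr_gt0 exprn_gt0 // ltr0n. Qed.

Lemma dyadicSD k : dyadic k.+1 + dyadic k.+1 = dyadic k.
Proof.
rewrite /dyadic exprS.
have h : (2%:R ^+ k : R) != 0 by apply: expf_neq0; rewrite pnatr_eq0.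
by field; rewrite h.
Qed.

Lemma dyadic_lt {d : R} : 0 < d -> exists k, dyadic k < d.
Proof.
move=> d0; have /archi_boundP : 0 <= d^-1 by rewrite invr_ge0 ltW.
set n := Num.Def.archi_bound _ => hn.
exists n; rewrite -(invrK d) ltf_pV2 ?posrE ?exprn_gt0 ?ltr0n ?invr_gt0 //.
apply: (lt_le_trans hn); rewrite -natrX ler_nat; exact/ltnW/ltn_expl.
Qed.

End dyadic.

Section closed_set_names.
Context {R : realType} {X : pseudoMetricType R} (a : nat -> X).

Definition basic_ball (e : nat * nat) : set X := ball (a e.1) (dyadic e.2).

(* Interiors rather than the (open) balls themselves, so that membership comes
   with a witnessing smaller ball. *)
Definition avoid_balls (E : nat -> nat * nat) : set X :=
  [set x | forall j, ~ (basic_ball (E j))° x].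

(* The point named by [f] lies within [dyadic m] of [a (f m)], so the doubled
   radius makes the certificate valid for a whole neighbourhood of that point. *)
Definition certified_inside (E : nat -> nat * nat) (f : nat -> nat) (c : nat) :=
  exists j m, [/\ (j <= c)%N, (m <= c)%N &
    ball (a (f m)) (dyadic m + dyadic m) `<=` basic_ball (E j)].

Lemma certified_inside_ext E E' f f' c :
  (forall j, (j <= c)%N -> E j = E' j) -> (forall m, (m <= c)%N -> f m = f' m) ->
  certified_inside E f c -> certified_inside E' f' c.
Proof.
by move=> eE ef [j [m [jc mc sub]]]; exists j, m; rewrite -eE // -ef.
Qed.

Lemma certified_inside_mono E f c c' :
  (c <= c')%N -> certified_inside E f c -> certified_inside E f c'.
Proof.
move=> cc' [j [m [jc mc sub]]]; exists j, m.
by split=> //; apply: leq_trans cc'.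
Qed.

Lemma certified_insideP E p x : cauchy_name a p x ->
  (exists c, certified_inside E p c) <-> exists j, (basic_ball (E j))° x.
Proof.
move=> px; split=> [[c [j [m [_ _ sub]]]]|[j /nbhs_ballP [r r0 sub]]].
  exists j; apply: filterS (nbhsx_ballx x _ (dyadic_gt0 m)) => w xw.
  exact/sub/(ball_triangle (px m) xw).
have [m mr] : exists m, dyadic m < r / 3%:R by apply: dyadic_lt; rewrite divr_gt0.
exists (maxn j m), j, m; split; [exact: leq_maxl|exact: leq_maxr|].
move=> w /(ball_triangle (ball_sym (px m))) xw; apply: sub; apply: le_ball xw.
by rewrite -/(dyadic m); have := @dyadic_gt0 R m; lra.
Qed.

(* The Kleene associate reads the code of [(n, l)] and answers as soon as the
   prefix [l] has length [n.+1]; the answer [k.+1] means output [k]. *)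
Definition avoid_balls_assoc (E : nat -> nat * nat) : baire := fun code =>
  if (unpickle code : option (nat * seq nat)) is Some (n, l) then
    if size l == n.+1 then
      (if `[< certified_inside E (nth 0%N l) n >] then 1 else 2)%N
    else 0%N
  else 0%N.

Lemma avoid_balls_assoc_out E p n :
  assoc_out (avoid_balls_assoc E) p n
    (if `[< certified_inside E p n >] then 0 else 1)%N.
Proof.
exists n.+1; split=> [|m mn]; rewrite /avoid_balls_assoc pickleK size_mkseq.
  rewrite eqxx (@asbool_equiv_eq _ (certified_inside E p n)); first by case: ifP.
  by split; apply: certified_inside_ext => // m mn; rewrite nth_mkseq.
by rewrite ltn_eqF.
Qed.

Lemma avoid_balls_nameP E : O'_name a (avoid_balls_assoc E) (avoid_balls E).
Proof.
move=> p x px; eexists; split; first exact: avoid_balls_assoc_out.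
have [s [lim_s s_ok]] := @S'_name_monotone _ (@certified_inside_mono E p).
exists s; split=> //; apply: iff_trans s_ok.
split=> [xE /(certified_insideP E _ _ px) [j]|nE j Ej]; first exact: xE.
by apply: nE; apply/(certified_insideP E _ _ px); exists j.
Qed.

Definition code_bound (M : nat) : nat :=
  \max_(i < M) (if (unpickle i : option (nat * seq nat)) is Some (n, _)
                then n.+1 else 0)%N.

Lemma avoid_balls_assoc_local E E' M :
  (forall j, (j < code_bound M)%N -> E j = E' j) ->
  forall c, (c < M)%N -> avoid_balls_assoc E c = avoid_balls_assoc E' c.
Proof.
move=> eE c cM; have := @leq_bigmax _ (fun i : 'I_M =>
  if (unpickle i : option (nat * seq nat)) is Some (n, _) then n.+1 else 0)%N
  (Ordinal cM).
rewrite /avoid_balls_assoc /= -/(code_bound M).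
case: (unpickle c) => [[n l] nM|//].
have eEn j : (j <= n)%N -> E j = E' j by move=> jn; apply/eE/(leq_trans _ nM).
rewrite (@asbool_equiv_eq _ (certified_inside E' (nth 0%N l) n)) //.
by split; apply: certified_inside_ext => // j /eEn.
Qed.

End closed_set_names.

Section Ksigma_cover.
Context {T : topologicalType}.

Definition Ksigma_covered (S : set T) :=
  exists K : nat -> set T, (forall n, compact (K n)) /\ S `<=` \bigcup_n K n.

Lemma Ksigma_covered_sub {S S' : set T} :
  S `<=` S' -> Ksigma_covered S' -> Ksigma_covered S.
Proof. by move=> SS' [K [cK S'K]]; exists K; split => // x /SS' /S'K. Qed.

Lemma compact_Ksigma_covered (C : set T) : compact C -> Ksigma_covered C.
Proof. by move=> cC; exists (fun=> C); split => // x Cx; exists 0%N. Qed.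

Lemma Ksigma_covered_bigcup (I : countType) (S : I -> set T) :
  (forall i, Ksigma_covered (S i)) -> Ksigma_covered (\bigcup_i S i).
Proof.
move=> /choice [K cK].
exists (fun n => if (unpickle n : option (I * nat)) is Some (i, m) then K i m
                 else set0); split.
  by move=> n; case: unpickle => [[i m]|]; [exact: (cK i).1|exact: compact0].
move=> x [i _ /(cK i).2 [m _ Kx]].
by exists (pickle (i, m)) => //; rewrite pickleK.
Qed.

Lemma Ksigma_coveredU {S S' : set T} :
  Ksigma_covered S -> Ksigma_covered S' -> Ksigma_covered (S `|` S').
Proof.
move=> cS cS'.
have /Ksigma_covered_bigcup : forall b : bool, Ksigma_covered (if b then S else S').
  by case.
by apply: Ksigma_covered_sub => x [Sx|S'x]; [exists true|exists false].
Qed.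

Lemma Ksigma_covered_setT : Ksigma_covered setT -> @K_sigma T.
Proof.
by move=> [K [cK TK]]; exists K; split => //; apply/seteqP; split => // x _; apply: TK.
Qed.

End Ksigma_cover.

Lemma ultra_finite_cover {T : Type} {F : set_system T} (UF : UltraFilter F)
    n (B : nat -> set T) :
  F [set x | exists2 i, (i < n)%N & B i x] -> exists2 i, (i < n)%N & F (B i).
Proof.
elim: n => [|n IHn] FB; first by have [x [i]] := filter_ex FB.
have [FBn|FnBn] := in_ultra_setVsetC (B n) UF; first by exists n.
suff [i ilt FBi] : exists2 i, (i < n)%N & F (B i) by exists i => //; exact: ltnW.
apply: IHn; apply: filterS (filterI FB FnBn) => x [[i + Bix] nBnx].
by rewrite ltnS leq_eqVlt => /orP [/eqP ei|]; [rewrite ei in Bix|exists i].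
Qed.

Section totally_bounded.
Context {R : realType} {X : pseudoMetricType R}.

Definition totally_bounded (A : set X) := forall e, 0 < e ->
  exists n (c : nat -> X), A `<=` [set x | exists2 i, (i < n)%N & ball (c i) e x].

Lemma not_totally_bounded_escape {A : set X} : ~ totally_bounded A ->
  exists2 e, 0 < e & forall n (c : nat -> X),
    exists2 z, A z & forall i, (i < n)%N -> ~ ball (c i) e z.
Proof.
move=> ntb; apply: contrapT => nesc; apply: ntb => e e0.
apply: contrapT => ncov; apply: nesc; exists e => // n c.
apply: contrapT => nz; apply: ncov; exists n, c => z Az.
by apply: contrapT => nb; apply: nz; exists z => // i ilt bz; apply: nb; exists i.
Qed.

End totally_bounded.

Lemma totally_bounded_compact_closure {R : realType}
    {X : completePseudoMetricType R} (A : set X) :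
  totally_bounded A -> compact (closure A).
Proof.
move=> tbA; rewrite compact_ultra => F UF FA.
have cauchyF : cauchy_ex F.
  move=> e e0; have [n [c Ac]] := tbA _ (divr_gt0 e0 (ltr0n R 2)).
  suff /(ultra_finite_cover UF) [i _ Fi] :
      F [set x | exists2 i, (i < n)%N & ball (c i) e x] by exists (c i).
  apply: filterS FA => w /(_ _ (nbhsx_ballx w _ (divr_gt0 e0 (ltr0n R 2)))).
  move=> [y [/Ac [i ilt ciy] yw]]; exists i => //.
  by move: (ball_triangle ciy (ball_sym yw)); apply: le_ball; lra.
have cvgF : cvg F by apply: cauchy_cvg; apply: cauchy_exP.
exists (lim F); split => //.
have : cluster F (lim F) by rewrite ultra_cvg_clusterE.
rewrite clusterE => /(_ _ FA).
by rewrite -(proj1 (closure_id _) (@closed_closure _ A)).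
Qed.

Section non_Ksigma_points.
Context {R : realType} {X : completePseudoMetricType R} {a : nat -> X}.
Hypothesis dense_a : dense (range a).

Lemma dense_ball (x : X) {e : R} : 0 < e -> exists j, ball x e (a j).
Proof.
move=> e0; have [y [/interior_subset xy [j _ ajy]]] : (ball x e)° `&` range a !=set0.
  by apply: dense_a; [exists x; exact: nbhsx_ballx|exact: open_interior].
by exists j; rewrite ajy.
Qed.

Definition non_Ksigma_points : set X :=
  [set x | forall e, 0 < e -> ~ Ksigma_covered (ball x e)].

Lemma Ksigma_covered_locally : Ksigma_covered (~` non_Ksigma_points).
Proof.
pose good_ball e :=
  if `[< Ksigma_covered (basic_ball a e) >] then basic_ball a e else set0.
apply: (Ksigma_covered_sub _ (@Ksigma_covered_bigcup _ _ good_ball _)).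
  move=> x nZx; apply: contrapT => ngood; apply: nZx => e e0 goode.
  have [k ke] : exists k, dyadic k < e / 2%:R by apply: dyadic_lt; rewrite divr_gt0.
  have [j xj] := dense_ball x (dyadic_gt0 k).
  apply: ngood; exists (j, k) => //; rewrite /good_ball asboolT; first exact: ball_sym.
  apply: Ksigma_covered_sub goode => w /(ball_triangle xj).
  by apply: le_ball; rewrite -/(dyadic k); lra.
move=> e; rewrite /good_ball; case: asboolP => // _.
exact/compact_Ksigma_covered/compact0.
Qed.

Lemma non_Ksigma_points_not_totally_bounded {y r} :
  non_Ksigma_points y -> 0 < r ->
  ~ totally_bounded (non_Ksigma_points `&` ball y r).
Proof.
move=> Zy r0 /totally_bounded_compact_closure /compact_Ksigma_covered tb.
apply: (Zy r r0); apply: Ksigma_covered_sub (Ksigma_coveredU tb Ksigma_covered_locally).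
move=> z yz; have [Zz|] := pselect (non_Ksigma_points z); last by right.
by left; apply: subset_closure.
Qed.

End non_Ksigma_points.

Section overt_realizer.
Context {R : realType} {X : completePseudoMetricType R} (a : nat -> X).
Hypothesis dense_a : dense (range a).
Variable F : baire -> baire.
Hypothesis F_cont : cont_on [set q | exists U, O'_name a q U] F.
Hypothesis F_overt : forall q U, O'_name a q U -> S'_name (F q) (U !=set0).

Definition pad_enum (E : nat -> nat * nat) (N k i : nat) : nat * nat :=
  if (i < N)%N then E i else ((i - N)%N, k).

Lemma avoid_balls_pad_enum E N k : avoid_balls a (pad_enum E N k) = set0.
Proof.
apply/seteqP; split=> // x xA; have [j xj] := dense_ball dense_a x (dyadic_gt0 k.+1).
apply: (xA (N + j)%N); rewrite /pad_enum ltnNge leq_addr /= addKn.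
apply: filterS (nbhsx_ballx x _ (dyadic_gt0 k.+1)) => w xw.
by rewrite /basic_ball /= -dyadicSD; exact: ball_triangle (ball_sym xj) xw.
Qed.

Lemma realizer_zeros_cofinal {q} : O'_name a q set0 ->
  forall n b, exists2 i, (b <= i)%N & F q (cpair n i) = 0%N.
Proof.
move=> qname n b; have [s [lim_s s_ok]] := F_overt _ _ qname.
have [i0 hi0] := lim_s n; exists (maxn b i0); first exact: leq_maxl.
rewrite hi0 ?leq_maxr //; case: (s n =P 0%N) => // sn.
by have [x []] := s_ok.2 (ex_intro _ n sn).
Qed.

Lemma prefix_forces_zeros {q} t b : O'_name a q set0 ->
  exists M, forall n, (n <= t)%N -> exists2 i, (b <= i)%N &
    forall q', (exists U, O'_name a q' U) ->
      (forall c, (c < M)%N -> q' c = q c) -> F q' (cpair n i) = 0%N.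
Proof.
move=> qname; apply: uniform_bound => n.
have [i bi Fi] := realizer_zeros_cofinal qname n b.
have [m hm] := F_cont q (ex_intro _ set0 qname) (cpair n i).
exists m => m' mm'; exists i => // q' q'name qq'.
by rewrite hm ?Fi // => c cm; apply/qq'/(leq_trans cm).
Qed.

Lemma pad_enum_forces_zeros E N k t : exists2 N', (N < N')%N &
  forall E', (forall j, (j < N')%N -> E' j = pad_enum E N k j) ->
  forall n, (n <= t)%N ->
    exists2 i, (t <= i)%N & F (avoid_balls_assoc a E') (cpair n i) = 0%N.
Proof.
have := avoid_balls_nameP a (pad_enum E N k); rewrite avoid_balls_pad_enum.
move=> /(prefix_forces_zeros t t) [M hM].
exists (maxn N.+1 (code_bound M)); first exact: leq_maxl.
move=> E' E'E n nt; have [i ti hi] := hM n nt; exists i => //.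
apply: hi; first by exists (avoid_balls a E'); exact: avoid_balls_nameP.
by apply: avoid_balls_assoc_local => j jM; apply/E'E/(leq_trans jM)/leq_maxr.
Qed.

Record stage := Stage {
  st_enum : nat -> nat * nat;
  st_len : nat;
  st_center : X;
  st_radius : R }.

Definition st_ball (s : stage) : set X := ball (st_center s) (st_radius s).

Definition stage_ok (s : stage) :=
  [/\ non_Ksigma_points (st_center s), 0 < st_radius s &
    forall j, (j < st_len s)%N -> forall w, st_ball s w ->
      ~ basic_ball a (st_enum s j) w].

Definition stage_next (t : nat) (s s' : stage) := [/\ (st_len s < st_len s')%N,
  forall j, (j < st_len s)%N -> st_enum s' j = st_enum s j,
  st_radius s' <= dyadic t,
  ball (st_center s') (st_radius s' + st_radius s') `<=` st_ball s &
  forall E, (forall j, (j < st_len s')%N -> E j = st_enum s' j) ->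
    forall n, (n <= t)%N ->
      exists2 i, (t <= i)%N & F (avoid_balls_assoc a E) (cpair n i) = 0%N].

Lemma stage_step t s : stage_ok s -> exists2 s', stage_ok s' & stage_next t s s'.
Proof.
case: s => E N y r [/= Zy r0 disj].
have r2 : 0 < r / 2%:R by rewrite divr_gt0.
have [e e0 escape] := not_totally_bounded_escape
  (non_Ksigma_points_not_totally_bounded dense_a Zy r2).
have [k ke] : exists k, dyadic k < e / 2%:R by apply: dyadic_lt; rewrite divr_gt0.
have [N' NN' forces] := pad_enum_forces_zeros E N k t.
have [z [Zz yz] zfar] := escape (N' - N)%N a.
pose r' := Num.min (r / 4%:R) (Num.min (e / 2%:R) (dyadic t)).
have r'0 : 0 < r' by rewrite !lt_min dyadic_gt0 !divr_gt0.
have [r'r r'e r't] : [/\ r' <= r / 4%:R, r' <= e / 2%:R & r' <= dyadic t].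
  by rewrite !ge_min !lexx !orbT.
have z_in_y : ball z (r' + r') `<=` ball y r.
  by move=> w /(ball_triangle yz); apply: le_ball; lra.
exists (Stage (pad_enum E N k) N' z r'); split => //=.
- move=> j jN' w zw; rewrite /pad_enum; case: ifPn => [jN|].
    by apply: (disj j jN w); apply: z_in_y; move: zw; apply: le_ball => /=; lra.
  rewrite -leqNgt => Nj bw; apply: (zfar (j - N)%N); first by rewrite ltn_sub2rE.
  by move: (ball_triangle bw (ball_sym zw)); apply: le_ball => /=; lra.
- by move=> j jN; rewrite /pad_enum jN.
Qed.

Definition refines (s s' : stage) := [/\ (st_len s <= st_len s')%N,
  forall j, (j < st_len s)%N -> st_enum s' j = st_enum s j &
  st_ball s' `<=` st_ball s].

Lemma refines_trans s1 s2 s3 : refines s1 s2 -> refines s2 s3 -> refines s1 s3.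
Proof.
move=> [l12 e12 b12] [l23 e23 b23]; split=> [|j j1|w /b23 /b12 //].
  exact: leq_trans l23.
by rewrite e23 ?e12 //; apply: leq_trans l12.
Qed.

Lemma stage_next_refines t s s' :
  stage_ok s' -> stage_next t s s' -> refines s s'.
Proof.
move=> [_ r0 _] [/ltnW ll' ee' _ nest _]; split=> // w sw.
by apply: nest; apply: le_ball sw; lra.
Qed.

Section run.
Variable S : nat -> stage.
Hypothesis S_run : forall n, stage_ok (S n) /\ stage_next n (S n) (S n.+1).

Lemma run_refines {m n} : (m <= n)%N -> refines (S m) (S n).
Proof.
apply: chain_le => [s|s1 s2 s3|k]; [by split|exact: refines_trans|].
exact: stage_next_refines (S_run k.+1).1 (S_run k).2.
Qed.

Lemma run_len_ge n : (n <= st_len (S n))%N.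
Proof.
elim: n => // n IHn; have [_ [lt _ _ _ _]] := S_run n.
exact: leq_ltn_trans IHn lt.
Qed.

Lemma run_limit : exists x, forall t, st_ball (S t) x.
Proof.
pose u n := st_center (S n).
have r0 n : 0 < st_radius (S n) by have [[]] := S_run n.
have u_in m n : (m <= n)%N -> st_ball (S m) (u n).
  by move=> mn; have [_ _ sub] := run_refines mn; apply: sub; exact: ballxx.
have cvg_u : cvg (u @ \oo).
  apply: cauchy_cvg; apply: cauchy_exP => e e0; have [t te] := dyadic_lt e0.
  exists (u t.+1); apply: filterS (nbhs_infty_ge t.+1) => n tn.
  have [_ _ rt _ _] := (S_run t).2.
  exact: le_ball (le_trans rt (ltW te)) _ (u_in _ _ tn).
exists (lim (u @ \oo)) => t; have [_ _ _ nest _] := (S_run t).2; apply: nest.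
have near_lim : \forall n \near \oo, ball (lim (u @ \oo)) (st_radius (S t.+1)) (u n).
  exact: cvg_u _ (nbhsx_ballx _ _ (r0 t.+1)).
have [n [xun tn]] := filter_ex (filterI near_lim (nbhs_infty_ge t.+1)).
exact: ball_triangle (u_in _ _ tn) (ball_sym xun).
Qed.

Definition run_enum (j : nat) : nat * nat := st_enum (S j.+1) j.

Lemma run_enum_agree t j : (j < st_len (S t))%N -> run_enum j = st_enum (S t) j.
Proof.
move=> jt; have [_ e1 _] := run_refines (leq_maxl j.+1 t).
have [_ e2 _] := run_refines (leq_maxr j.+1 t).
by rewrite /run_enum -e1 ?e2 //; exact: run_len_ge.
Qed.

Lemma run_limit_avoids x : (forall t, st_ball (S t) x) -> avoid_balls a run_enum x.
Proof.
move=> xin j /interior_subset xj; have [[_ _ disj] _] := S_run j.+1.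
exact: disj j (run_len_ge j.+1) x (xin j.+1) xj.
Qed.

Lemma run_absurd : False.
Proof.
have [x /run_limit_avoids Ax] := run_limit.
have [n [i0 nz]] := S'_name_true (F_overt _ _ (avoid_balls_nameP a run_enum))
  (ex_intro _ x Ax).
have [_ _ _ _ forces] := (S_run (maxn n i0)).2.
have [i ti Fi] := forces run_enum (@run_enum_agree _) n (leq_maxl n i0).
exact: nz i (leq_trans (leq_maxr n i0) ti) Fi.
Qed.

End run.

End overt_realizer.

Theorem lemma39 (R : realType) (X : completePseudoMetricType R)
  (HX : hausdorff_space X)
  (a : nat -> X) (Ha : dense (range a)) :
  prime_overt a -> @K_sigma X.
Proof.
move=> [F [F_cont F_overt]]; apply: Ksigma_covered_setT.
have [[y Zy]|noZ] := pselect (exists y : X, non_Ksigma_points y); last first.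
  by apply: Ksigma_covered_sub (Ksigma_covered_locally Ha) => x _ Zx; apply: noZ; exists x.
have s0_ok : stage_ok a (Stage (fun=> (0, 0)%N) 0 y 1) by split=> //; exact: ltr01.
have [S S_run] := dependent_choice_nat s0_ok (stage_step a Ha F F_cont F_overt).
by case: (run_absurd a F F_overt S S_run).
Qed.
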